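(* Assume (A1) and (A2) at time $k$, let $\phi$ satisfy (A3) at time $k$, and suppose that for a constant $\widetilde C_{k|k-1}$ independent of $N$, $\mathbb{E}|\langle\widetilde\pi^N_{k|k-1},\beta_k\rangle-\langle\pi_{k|k-1},\beta_k\rangle|^4\le\widetilde C_{k|k-1}\|\beta_k\|_\infty^4/N^2$ and $\mathbb{E}|\langle\widetilde\pi^N_{k|k-1},\beta_k\phi\rangle-\langle\pi_{k|k-1},\beta_k\phi\rangle|^4\le\widetilde C_{k|k-1}\|\beta_k\|_\infty^4\|\phi\|^4_{k-1,4}/N^2$. Then $$\mathbb{E}\big|\langle\widetilde\pi^N_{k|k},\phi\rangle-\langle\pi_{k|k},\phi\rangle\big|^4\le\widetilde C_{k|k}\frac{\|\phi\|^4_{k-1,4}}{N^2},\qquad \widetilde C_{k|k}^{1/4}=\frac{\widetilde C_{k|k-1}^{1/4}\|\beta_k\|_\infty}{\gamma_k\langle\pi_{k|k-1},\beta_k\rangle}\big(\|\beta_k\phi\|_\infty+\gamma_k\big).$$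
   Context: Notation: for a measure $\nu$ and function $\phi$, $\langle\nu,\phi\rangle=\int\phi\,d\nu$; $\|f\|_\infty$ is the supremum norm. Fixed data: integer $k\ge1$; deterministic vectors $\mathbf{x}_0,\dots,\mathbf{x}_k\in\mathbb{R}^{n_x}$ (defender's true states) and $\mathbf{a}_1,\dots,\mathbf{a}_k\in\mathbb{R}^{n_a}$ (defender's observations); a conditional density $\rho(\mathbf{y}|\mathbf{x})$ in $\mathbf{y}\in\mathbb{R}^{n_y}$; a conditional density $\beta(\mathbf{a}|\hat{\mathbf{x}})$ in $\mathbf{a}\in\mathbb{R}^{n_a}$, $\hat{\mathbf{x}}\in\mathbb{R}^{n_x}$; measurable maps $T_s:\mathbb{R}^{n_x}\times\mathbb{R}^{n_y}\to\mathbb{R}^{n_x}$, $s=1,\dots,k$ (the attacker's forward-filter update $\hat{\mathbf{x}}_s=T_s(\hat{\mathbf{x}}_{s-1},\mathbf{y}_s)$). Write $\beta_s(\hat{\mathbf{x}},\mathbf{y})=\beta(\mathbf{a}_s|\hat{\mathbf{x}})$ and, for a function $\psi$ of $(\hat{\mathbf{x}},\mathbf{y})$, $(\delta_T\rho\psi)_s(\hat{\mathbf{x}}',\mathbf{y}')=\int\psi(T_s(\hat{\mathbf{x}}',\mathbf{y}),\mathbf{y})\rho(\mathbf{y}|\mathbf{x}_s)\,d\mathbf{y}$ (abbreviated $\delta_T\rho\psi$). Optimal inverse filter: probability measures on $\mathbb{R}^{n_x}\times\mathbb{R}^{n_y}$ defined from $\pi_{0|0}=\pi_0$ by $\langle\pi_{s|s-1},\psi\rangle=\langle\pi_{s-1|s-1},\delta_T\rho\psi\rangle$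 and $\langle\pi_{s|s},\psi\rangle=\langle\pi_{s|s-1},\beta_s\psi\rangle/\langle\pi_{s|s-1},\beta_s\rangle$. I-PF with $N$ particles and thresholds $\gamma_s>0$: draw $\hat{\mathbf{x}}^i_0$ i.i.d. from a given distribution $\widetilde\pi^x_0$ and, independently, $\mathbf{y}^i_0$ i.i.d. from $\rho(\cdot|\mathbf{x}_0)$, $i=1,\dots,N$; $\pi_0$ is the (product) law of $(\hat{\mathbf{x}}^i_0,\mathbf{y}^i_0)$ and $\pi^N_{0|0}=\frac1N\sum_i\delta_{(\hat{\mathbf{x}}^i_0,\mathbf{y}^i_0)}$. For $s\ge1$, given particles $(\hat{\mathbf{x}}^i_{s-1},\mathbf{y}^i_{s-1})$: (1) draw conditionally i.i.d. $\bar{\mathbf{y}}^i_s\sim\rho(\cdot|\mathbf{x}_s)$ and set $\bar{\hat{\mathbf{x}}}^i_s=T_s(\hat{\mathbf{x}}^i_{s-1},\bar{\mathbf{y}}^i_s)$; (2) if $\frac1N\sum_i\beta(\mathbf{a}_s|\bar{\hat{\mathbf{x}}}^i_s)\ge\gamma_s$, accept and set $(\tilde{\hat{\mathbf{x}}}^i_s,\tilde{\mathbf{y}}^i_s)=(\bar{\hat{\mathbf{x}}}^i_s,\bar{\mathbf{y}}^i_s)$; otherwise redo (1) independently; (3) set $\widetilde\pi^N_{s|s-1}=\frac1N\sum_i\delta_{(\tilde{\hat{\mathbf{x}}}^i_s,\tilde{\mathbf{y}}^i_s)}$, weights $\omega^i_s=\beta(\mathbf{a}_s|\tilde{\hat{\mathbf{x}}}^i_s)/\sum_j\beta(\mathbf{a}_s|\tilde{\hat{\mathbf{x}}}^j_s)$,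 $\widetilde\pi^N_{s|s}=\sum_i\omega^i_s\delta_{(\tilde{\hat{\mathbf{x}}}^i_s,\tilde{\mathbf{y}}^i_s)}$; (4) draw $N$ conditionally i.i.d. $(\hat{\mathbf{x}}^i_s,\mathbf{y}^i_s)\sim\widetilde\pi^N_{s|s}$ and set $\pi^N_{s|s}=\frac1N\sum_i\delta_{(\hat{\mathbf{x}}^i_s,\mathbf{y}^i_s)}$. Expectations $\mathbb{E}$ are over the particle randomness. Norm: $\|\phi\|_{s,4}=\max\{1,\max_{0\le r\le s}\langle\pi_{r|r},|\phi|^4\rangle^{1/4}\}$. Assumptions: (A1) for $s=1,\dots,k$, $\langle\pi_{s|s-1},\beta_s\rangle>0$ and $0<\gamma_s<\langle\pi_{s|s-1},\beta_s\rangle$. (A2) $\beta(\mathbf{a}_s|\cdot)$ and $\rho(\cdot|\mathbf{x}_s)$ are bounded for $s=1,\dots,k$. (A3) for $s=1,\dots,k$, $\sup_{(\hat{\mathbf{x}},\mathbf{y})}|\phi(\hat{\mathbf{x}},\mathbf{y})|^4\beta(\mathbf{a}_s|\hat{\mathbf{x}})<\infty$. By construction (step (2)), $\langle\widetilde\pi^N_{k|k-1},\beta_k\rangle\ge\gamma_k$. *)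

From HB Require Import structures.
From mathcomp Require Import all_boot all_order all_algebra.
From mathcomp Require Import all_classical all_reals all_analysis.
Set Implicit Arguments. Unset Strict Implicit. Unset Printing Implicit Defensive.
Import Order.TTheory GRing.Theory Num.Theory.
Local Open Scope ring_scope.
Local Open Scope classical_set_scope.

Definition pair d (T : measurableType d) (R : realType)
  (nu : set T -> \bar R) (f : T -> R) : R :=
  fine (\int[nu]_x (f x)%:E)%E.

Definition supnorm (T : Type) (R : realType) (f : T -> R) : R :=
  sup [set `|f x| | x in [set: T]].

(* The fourth power of the norm ||phi||_{s,4}:
   ||phi||_{s,4}^4 = max{1, max_{0<=r<=s} <pi_{r|r}, |phi|^4>}  (extended real,
   since <pi_{r|r}, |phi|^4> may be infinite). [k-1] is encoded by ranging r < k. *)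
Definition norm4_pow4 d (T : measurableType d) (R : realType)
  (pif : nat -> probability T R) (k : nat) (phi : T -> R) : \bar R :=
  Order.max 1%E (\big[Order.max/-oo%E]_(r < k) (\int[pif r]_x ((`|phi x| ^+ 4)%:E))%E).

Definition emp_pair (T : Type) (R : realType) (N : nat)
  (X : 'I_N -> T) (psi : T -> R) : R :=
  (N%:R)^-1 * \sum_(i < N) psi (X i).

Definition wemp_pair (T : Type) (R : realType) (N : nat)
  (X : 'I_N -> T) (b : T -> R) (psi : T -> R) : R :=
  \sum_(i < N) (b (X i) / \sum_(j < N) b (X j)) * psi (X i).

(* Both sides are ratios: the weighted empirical average is
   <pi~N, beta phi> / <pi~N, beta>, and Bayes' rule gives
   <pi_{k|k}, phi> = <pi_{k|k-1}, beta phi> / <pi_{k|k-1}, beta>.  The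
   acceptance step keeps the random denominator above gamma_k, so the error of
   the ratio is at most
   (gamma_k |numerator error| + ||beta phi|| |denominator error|)
     / (gamma_k <pi_{k|k-1}, beta>).
   Raising to the fourth power with the convexity bound
   (g U + S V)^4 <= (g + S)^3 (g U^4 + S V^4) and integrating against the two
   assumed fourth-moment bounds yields the constant. *)

From HB Require Import structures.
From mathcomp Require Import all_boot all_order all_algebra.
From mathcomp Require Import all_classical all_reals all_analysis.
From mathcomp Require Import measurable_realfun.
From mathcomp.algebra_tactics Require Import ring.
Import Order.TTheory GRing.Theory Num.Theory.
Local Open Scope ring_scope.
Local Open Scope classical_set_scope.
Set Implicit Arguments.
Unset Strict Implicit.
Unset Printing Implicit Defensive.

Section density.
Context d (T : measurableType d) (R : realType).
Variables (nu : {finite_measure set T -> \bar R})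
          (mu : {sigma_finite_measure set T -> \bar R}) (G : T -> R).
Hypotheses (G_ge0 : forall x, 0 <= G x) (mG : measurable_fun setT G).
Hypothesis nuG : forall A, measurable A -> nu A = (\int[mu]_(x in A) (G x)%:E)%E.

Lemma density_dominates : nu `<< mu.
Proof.
move=> N muN A mA AN; rewrite nuG //; apply: null_set_integral => //.
  exact/measurable_EFinP/measurable_funTS.
exact: muN.
Qed.

Lemma integrable_density : mu.-integrable setT (EFin \o G).
Proof.
apply/integrableP; split; first exact/measurable_EFinP.
under eq_integral do rewrite /= ger0_norm //.
by rewrite -nuG // ltey_eq fin_num_measure.
Qed.

(* The Radon-Nikodym derivative of nu agrees with G mu-a.e., as both have the
   same integral over every measurable set. *)
Lemma ge0_integral_density (f : T -> \bar R) (E : set T) :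
  (forall x, 0 <= f x)%E -> measurable E -> measurable_fun E f ->
  (\int[nu]_(x in E) f x = \int[mu]_(x in E) (f x * (G x)%:E))%E.
Proof.
move=> f0 mE mf; have numu := density_dominates.
have iRN := Radon_Nikodym_SigmaFinite.f_integrable numu.
rewrite -(Radon_Nikodym_SigmaFinite.change_of_variables numu f0 mE mf).
apply: ae_eq_integral => //.
- by apply: emeasurable_funM => //; exact/measurable_funTS/(measurable_int _ iRN).
- by apply: emeasurable_funM => //; exact/measurable_funTS/measurable_EFinP.
apply: ae_eqe_mul2l; apply/ae_eq_sym; apply: integral_ae_eq => //.
- exact: integrableS integrable_density.
- exact/measurable_funTS/(measurable_int _ iRN).
- by move=> A _ mA; rewrite -nuG // (Radon_Nikodym_SigmaFinite.f_integral numu).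
Qed.

Lemma integral_density (f : T -> R) : measurable_fun setT f ->
  (\int[nu]_x (f x)%:E = \int[mu]_x (f x * G x)%:E)%E.
Proof.
move=> mf; have mfE : measurable_fun setT (EFin \o f) by exact/measurable_EFinP.
rewrite integralE [RHS]integralE.
rewrite ge0_integral_density //; last exact: measurable_funepos.
rewrite ge0_integral_density //; last exact: measurable_funeneg.
congr (_ - _)%E; apply: eq_integral => x _.
  by rewrite !funeposE EFinM maxe_pMl ?lee_fin // mul0e.
by rewrite !funenegE EFinM maxe_pMl ?lee_fin // mul0e mulNe.
Qed.

End density.

Lemma integral_pair_gt0 d (T : measurableType d) (R : realType)
  (mu : {measure set T -> \bar R}) (f : T -> R) :
  0 < pair mu f -> (\int[mu]_x (f x)%:E)%E = (pair mu f)%:E.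
Proof.
rewrite /pair; case: (\int[mu]_x _)%E => [r //||] /=; by rewrite ltxx.
Qed.

Lemma pair_reweight d (T : measurableType d) (R : realType)
  (nu : {finite_measure set T -> \bar R})
  (mu : {sigma_finite_measure set T -> \bar R}) (b f : T -> R) :
  (forall x, 0 <= b x) -> measurable_fun setT b -> measurable_fun setT f ->
  mu.-integrable setT (fun x => (b x * f x)%:E) -> 0 < pair mu b ->
  (forall A, measurable A ->
     (\int[mu]_(x in A) (b x)%:E = nu A * \int[mu]_x (b x)%:E)%E) ->
  pair nu f = pair mu (b \* f) / pair mu b.
Proof.
move=> b_ge0 mb mf ibf B_gt0 upd; set B := pair mu b.
have intB := integral_pair_gt0 B_gt0.
have nuG A : measurable A -> nu A = (\int[mu]_(x in A) (b x / B)%:E)%E.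
  move=> mA; under eq_integral do rewrite EFinM muleC.
  rewrite ge0_integralZl_EFin //; last 3 first.
  - by move=> x _; rewrite lee_fin.
  - exact/measurable_funTS/measurable_EFinP.
  - by rewrite invr_ge0 ltW.
  by rewrite upd // intB muleCA -EFinM mulVf ?mule1 // gt_eqF.
have bB_ge0 x : 0 <= b x / B by rewrite divr_ge0 // ltW.
have mbB : measurable_fun setT (fun x => b x / B).
  by apply: measurable_funM => //; exact: measurable_cst.
rewrite {1}/pair (integral_density bB_ge0 mbB nuG mf).
have -> : (fun x => (f x * (b x / B))%:E) = (fun x => (B^-1)%:E * (b x * f x)%:E)%E.
  by apply/funext => x; rewrite -EFinM; congr EFin; ring.
rewrite integralZl // fineM //; last exact: integrable_fin_num.
by rewrite mulrC.
Qed.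

Section fourth_moment_algebra.
Variable R : realFieldType.

Lemma sqr_wsum_le (g S U V : R) : 0 <= g -> 0 <= S ->
  (g * U + S * V) ^+ 2 <= (g + S) * (g * U ^+ 2 + S * V ^+ 2).
Proof.
move=> g_ge0 S_ge0; rewrite -subr_ge0.
have -> : (g + S) * (g * U ^+ 2 + S * V ^+ 2) - (g * U + S * V) ^+ 2
  = g * S * (U - V) ^+ 2 by ring.
by rewrite mulr_ge0 ?sqr_ge0 // mulr_ge0.
Qed.

Lemma exp4_wsum_le (g S U V : R) : 0 <= g -> 0 <= S ->
  (g * U + S * V) ^+ 4 <= (g + S) ^+ 3 * (g * U ^+ 4 + S * V ^+ 4).
Proof.
move=> g_ge0 S_ge0.
have sqrK (x : R) : x ^+ 4 = (x ^+ 2) ^+ 2 by rewrite -exprM.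
have gS_ge0 : 0 <= g + S by rewrite addr_ge0.
rewrite sqrK; apply: (le_trans (y := ((g + S) * (g * U ^+ 2 + S * V ^+ 2)) ^+ 2)).
  rewrite ler_pXn2r ?nnegrE ?sqr_ge0 ?sqr_wsum_le //.
  by rewrite mulr_ge0 // addr_ge0 // mulr_ge0 // sqr_ge0.
rewrite exprMn [_ ^+ 3]exprSr -mulrA ler_wpM2l ?sqr_ge0 //.
by have := sqr_wsum_le (U ^+ 2) (V ^+ 2) g_ge0 S_ge0; rewrite -!sqrK.
Qed.

(* Writing a/b - A/B = ((a - A) + (a/b) (B - b)) / B with |a/b| <= S/g. *)
Lemma dist_ratio_le (a b A B g S : R) : 0 < g -> 0 < B -> g <= b -> `|a| <= S ->
  `|a / b - A / B| <= (g * B)^-1 * (g * `|a - A| + S * `|b - B|).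
Proof.
move=> g_gt0 B_gt0 gb aS; have b_gt0 : 0 < b by apply: lt_le_trans gb.
have ab_le : `|a / b| <= S / g.
  rewrite normrM normfV (gtr0_norm b_gt0) ler_pdivrMr // mulrAC ler_pdivlMr //.
  by rewrite ler_pM // ltW.
have -> : a / b - A / B = ((a - A) + (a / b) * (B - b)) / B.
  by field; rewrite !gt_eqF.
have -> : (g * B)^-1 * (g * `|a - A| + S * `|b - B|)
    = (`|a - A| + S / g * `|b - B|) / B.
  by field; rewrite !gt_eqF.
rewrite normrM normfV (gtr0_norm B_gt0) ler_pM2r ?invr_gt0 //.
apply: le_trans (ler_normD _ _) _.
by rewrite lerD2l normrM distrC ler_wpM2r.
Qed.

Lemma exp4_dist_ratio_le (a b A B g S : R) :
  0 < g -> 0 < B -> g <= b -> `|a| <= S ->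
  `|a / b - A / B| ^+ 4
    <= ((g * B)^-1) ^+ 4 * (g + S) ^+ 3 * (g * `|a - A| ^+ 4 + S * `|b - B| ^+ 4).
Proof.
move=> g_gt0 B_gt0 gb aS; have S_ge0 : 0 <= S := le_trans (normr_ge0 a) aS.
have gB_ge0 : 0 <= (g * B)^-1 by rewrite invr_ge0 mulr_ge0 // ltW.
apply: (le_trans (y := ((g * B)^-1 * (g * `|a - A| + S * `|b - B|)) ^+ 4)).
  rewrite ler_pXn2r ?nnegrE ?dist_ratio_le //.
  by rewrite mulr_ge0 // addr_ge0 // mulr_ge0 // ltW.
rewrite exprMn -mulrA ler_wpM2l ?exprn_ge0 //.
exact: exp4_wsum_le (ltW g_gt0) S_ge0.
Qed.

Lemma normrM_le_exp4 (b p Mb M : R) : 0 <= b -> b <= Mb ->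
  `|p| ^+ 4 * b <= M -> `|b * p| <= Num.max 1 (Mb ^+ 3 * M).
Proof.
move=> b_ge0 bMb pM; set y := `|b * p|.
have y4 : y ^+ 4 <= Mb ^+ 3 * M.
  have -> : y ^+ 4 = b ^+ 3 * (`|p| ^+ 4 * b).
    by rewrite /y normrM (ger0_norm b_ge0) exprMn; ring.
  apply: (le_trans (y := b ^+ 3 * M)); first by rewrite ler_wpM2l ?exprn_ge0.
  have M_ge0 : 0 <= M := le_trans (mulr_ge0 (exprn_ge0 _ (normr_ge0 p)) b_ge0) pM.
  have Mb_ge0 : 0 <= Mb := le_trans b_ge0 bMb.
  by rewrite ler_wpM2r // ler_pXn2r ?nnegrE.
have [y_le1|y_gt1] := leP y 1; first by rewrite le_max y_le1.
by rewrite le_max (le_trans _ y4) ?orbT // ler_eXnr // ltW.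
Qed.

End fourth_moment_algebra.

Lemma exp4_powR_mul (R : realType) (c s : R) :
  0 <= c * s ^+ 4 -> c * s ^+ 4 = (c `^ 4%:R^-1 * s) ^+ 4.
Proof.
have [->|s_neq0] := eqVneq s 0; first by rewrite expr0n !mulr0 expr0n.
have s4_gt0 : 0 < s ^+ 4 by rewrite exprn_even_gt0.
rewrite pmulr_lge0 // => c_ge0.
rewrite exprMn; congr (_ * _).
by rewrite -powR_mulrn ?powR_ge0 // -powRrM mulVf ?powRr1.
Qed.

Section empirical_measure.
Variables (T : Type) (R : realType) (N : nat).
Hypothesis N_gt0 : (0 < N)%N.
Implicit Types (X : 'I_N -> T) (f b : T -> R).

Lemma emp_pair_norm_le X f M : (forall x, `|f x| <= M) -> `|emp_pair X f| <= M.
Proof.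
move=> fM; rewrite /emp_pair normrM ger0_norm ?invr_ge0 ?ler0n //.
rewrite mulrC ler_pdivrMr ?ltr0n //; apply: le_trans (ler_norm_sum _ _ _) _.
apply: le_trans (ler_sum _ (fun i _ => fM (X i))) _.
by rewrite sumr_const card_ord mulr_natr.
Qed.

Lemma wemp_pairE X b f : wemp_pair X b f = emp_pair X (b \* f) / emp_pair X b.
Proof.
rewrite /wemp_pair /emp_pair; under eq_bigr do rewrite mulrAC.
rewrite -big_distrl /= invfM mulrACA mulfV ?mul1r //.
by rewrite invr_eq0 pnatr_eq0 -lt0n.
Qed.

End empirical_measure.

Lemma measurable_emp_pair d (T : measurableType d) dO (Omega : measurableType dO)
    (R : realType) (N : nat) (X : 'I_N -> Omega -> T) (f : T -> R) :
  (forall i, measurable_fun setT (X i)) -> measurable_fun setT f ->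
  measurable_fun setT (fun w => emp_pair (fun i => X i w) f).
Proof.
move=> mX mf; apply: measurable_funM; first exact: measurable_cst.
by apply: measurable_sum => i; exact: measurableT_comp mf (mX i).
Qed.

Section supnorm.
Variables (T : Type) (R : realType) (f : T -> R) (M : R).
Hypothesis fM : forall x, `|f x| <= M.

Lemma supnorm_ub x : `|f x| <= supnorm f.
Proof. by apply: ub_le_sup; [exists M => _ [y _ <-]|exists x]. Qed.

Lemma supnorm_ge0 : 0 <= supnorm f.
Proof.
have [[x ?]|noT] := pselect (exists x : T, True).
  exact: le_trans (normr_ge0 (f x)) (supnorm_ub x).
rewrite /supnorm (_ : [set _ | _ in _] = set0) ?sup0 //.
by apply/seteqP; split => // y [x _ _]; apply: noT; exists x.
Qed.

End supnorm.

(* No measurability is needed: the integral of a nonnegative function is the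
   supremum of the integrals of the simple functions below it. *)
Lemma ge0_le_integralT d (T : measurableType d) (R : realType)
    (mu : {measure set T -> \bar R}) (f g : T -> \bar R) :
  (forall x, 0 <= f x)%E -> (forall x, f x <= g x)%E ->
  (\int[mu]_x f x <= \int[mu]_x g x)%E.
Proof.
move=> f_ge0 fg; have g_ge0 x : (0 <= g x)%E := le_trans (f_ge0 x) (fg x).
rewrite !ge0_integralTE //; apply: ereal_sup_le => _ [h hf <-]; exists h => //= x.
exact: le_trans (hf x) (fg x).
Qed.

Lemma integral_wsum_le d (T : measurableType d) (R : realType)
    (mu : {measure set T -> \bar R}) (U V : T -> R) (c1 c2 a : R) (n : \bar R) :
  (forall x, 0 <= U x) -> (forall x, 0 <= V x) ->
  measurable_fun setT U -> measurable_fun setT V ->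
  0 <= c1 -> 0 <= c2 -> (1 <= n)%E ->
  (\int[mu]_x (U x)%:E <= a%:E * n)%E -> (\int[mu]_x (V x)%:E <= a%:E)%E ->
  (\int[mu]_x (c1 * U x + c2 * V x)%:E <= ((c1 + c2) * a)%:E * n)%E.
Proof.
move=> U_ge0 V_ge0 mU mV c1_ge0 c2_ge0 n_ge1 intU intV.
have a_ge0 : 0 <= a.
  by rewrite -lee_fin (le_trans _ intV) // integral_ge0 // => x _; rewrite lee_fin.
have mUE : measurable_fun setT (fun x => (U x)%:E) by exact/measurable_EFinP.
have mVE : measurable_fun setT (fun x => (V x)%:E) by exact/measurable_EFinP.
under eq_integral do rewrite EFinD !EFinM.
rewrite ge0_integralD //; last 4 first.
- by move=> x _; rewrite mule_ge0 ?lee_fin.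
- by apply: emeasurable_funM => //; exact: measurable_cst.
- by move=> x _; rewrite mule_ge0 ?lee_fin.
- by apply: emeasurable_funM => //; exact: measurable_cst.
rewrite !ge0_integralZl_EFin //; try by move=> x _; rewrite lee_fin.
rewrite mulrDl EFinD ge0_muleDl ?lee_fin ?mulr_ge0 // EFinM -muleA.
apply: leeD; first by apply: lee_wpmul2l; rewrite ?lee_fin.
have c2a_ge0 : (0 <= (c2 * a)%:E)%E by rewrite lee_fin mulr_ge0.
apply: le_trans (@lee_pemulr _ n _ c2a_ge0 n_ge1).
by rewrite EFinM; apply: lee_wpmul2l; rewrite ?lee_fin.
Qed.

Lemma bounded_integrable d (T : measurableType d) (R : realType)
    (mu : {finite_measure set T -> \bar R}) (f : T -> R) (M : R) :
  measurable_fun setT f -> (forall x, `|f x| <= M) ->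
  mu.-integrable setT (EFin \o f).
Proof.
move=> mf fM; apply: measurable_bounded_integrable => //.
  by rewrite ltey_eq fin_num_measure.
exists M; split => [|M' MM' x _]; first exact: num_real.
exact: le_trans (fM x) (ltW MM').
Qed.

Section weighted_empirical_moment.
Variables (dO : measure_display) (Omega : measurableType dO) (R : realType).
Variables (P : {measure set Omega -> \bar R}) (d : measure_display).
Variables (T : measurableType d) (N : nat) (X : 'I_N -> Omega -> T).
Hypotheses (N_gt0 : (0 < N)%N) (mX : forall i, measurable_fun setT (X i)).

Let dev4 (h : T -> R) (c : R) (w : Omega) := `|emp_pair (X^~ w) h - c| ^+ 4.

Let measurable_dev4 h c : measurable_fun setT h -> measurable_fun setT (dev4 h c).
Proof.
move=> mh; apply: measurable_funX; apply: measurableT_comp => //.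
by apply: measurable_funB; [exact: measurable_emp_pair|exact: measurable_cst].
Qed.

Lemma wemp_pair_moment4_le (b f : T -> R) (g S A B a : R) (n : \bar R) :
  measurable_fun setT b -> measurable_fun setT f ->
  0 < g -> 0 < B -> (forall w, g <= emp_pair (X^~ w) b) ->
  (forall x, `|b x * f x| <= S) -> 0 <= S -> (1 <= n)%E ->
  (\int[P]_w (dev4 (b \* f) A w)%:E <= a%:E * n)%E ->
  (\int[P]_w (dev4 b B w)%:E <= a%:E)%E ->
  (\int[P]_w (`|wemp_pair (X^~ w) b f - A / B| ^+ 4)%:E
     <= (((g * B)^-1) ^+ 4 * (g + S) ^+ 4 * a)%:E * n)%E.
Proof.
move=> mb mf g_gt0 B_gt0 accept bfS S_ge0 n_ge1 momA momB.
pose K4 := ((g * B)^-1) ^+ 4 * (g + S) ^+ 3.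
have K4_ge0 : 0 <= K4.
  by rewrite mulr_ge0 ?exprn_ge0 ?invr_ge0 ?addr_ge0 ?mulr_ge0 // ltW.
have dev_le w : `|wemp_pair (X^~ w) b f - A / B| ^+ 4
    <= K4 * g * dev4 (b \* f) A w + K4 * S * dev4 b B w.
  rewrite -mulrA -[K4 * S * _]mulrA -mulrDr wemp_pairE //.
  exact: exp4_dist_ratio_le g_gt0 B_gt0 (accept w) (emp_pair_norm_le N_gt0 _ bfS).
apply: (le_trans (y := (\int[P]_w
    (K4 * g * dev4 (b \* f) A w + K4 * S * dev4 b B w)%:E)%E)).
  apply: ge0_le_integralT => w; first by rewrite lee_fin exprn_ge0.
  by rewrite lee_fin dev_le.
apply: le_trans (integral_wsum_le _ _ _ _ _ _ n_ge1 momA momB) _.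
- by move=> w; rewrite exprn_ge0.
- by move=> w; rewrite exprn_ge0.
- exact/measurable_dev4/measurable_funM.
- exact: measurable_dev4.
- by rewrite mulr_ge0 // ltW.
- by rewrite mulr_ge0.
suff -> : (K4 * g + K4 * S) * a = ((g * B)^-1) ^+ 4 * (g + S) ^+ 4 * a by [].
by rewrite /K4; ring.
Qed.

End weighted_empirical_moment.

Theorem claim1
  (R : realType)
  (* mu: reference measure on y-space for the densities rho *)
  (d1 d2 : measure_display)
  (Xh : measurableType d1) (Y : measurableType d2)
  (mu : {measure set Y -> \bar R})
  (k : nat) (k_ge1 : (1 <= k)%N)
  (* rho s = rho(. | x_s), beta s = beta(a_s | .), T s = attacker's update *)
  (rho : nat -> Y -> R) (beta : nat -> Xh -> R) (T : nat -> Xh -> Y -> Xh)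
  (rho_ge0 : forall s y, 0 <= rho s y)
  (beta_ge0 : forall s x, 0 <= beta s x)
  (beta_meas : forall s, measurable_fun [set: Xh] (beta s))
  (* optimal inverse filter: pif s = pi_{s|s}, pip s = pi_{s|s-1} *)
  (pif pip : nat -> probability (Xh * Y)%type R)
  (pred_step : forall s, (1 <= s <= k)%N -> forall A, measurable A ->
     (pip s A = \int[pif s.-1]_p \int[mu]_y
                 ((\1_A (T s p.1 y, y) : R) * rho s y)%:E)%E)
  (upd_step : forall s, (1 <= s <= k)%N -> forall A, measurable A ->
     (\int[pip s]_(p in A) (beta s p.1)%:E)%E
       = (pif s A * \int[pip s]_p (beta s p.1)%:E)%E)
  (gamma : nat -> R)
  (A1a : 0 < pair (pip k) (fun p => beta k p.1))
  (A1b : 0 < gamma k /\ gamma k < pair (pip k) (fun p => beta k p.1))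
  (A2b : exists M, forall x, beta k x <= M)
  (A2r : exists M, forall y, rho k y <= M)
  (phi : Xh * Y -> R) (phi_meas : measurable_fun [set: Xh * Y] phi)
  (A3 : exists M, forall p, `|phi p| ^+ 4 * beta k p.1 <= M)
  (* particle randomness: probability space and the N accepted predicted
     particles (tilde x-hat^i_k, tilde y^i_k) of the I-PF at time k *)
  (dO : measure_display) (Omega : measurableType dO) (Pr : probability Omega R)
  (N : nat) (N_gt0 : (0 < N)%N)
  (Xt : 'I_N -> Omega -> Xh * Y)
  (Xt_meas : forall i, measurable_fun [set: Omega] (Xt i))
  (* acceptance step (2) of the I-PF *)
  (accept : forall w, gamma k <= emp_pair (fun i => Xt i w) (fun p => beta k p.1))
  (Ct : R)
  (H1 : (\int[Pr]_w ((`| emp_pair (fun i => Xt i w) (fun p => beta k p.1)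
                        - pair (pip k) (fun p => beta k p.1) | ^+ 4)%:E)
         <= (Ct * supnorm (beta k) ^+ 4 / (N%:R ^+ 2))%:E)%E)
  (H2 : (\int[Pr]_w ((`| emp_pair (fun i => Xt i w) (fun p => beta k p.1 * phi p)
                        - pair (pip k) (fun p => beta k p.1 * phi p) | ^+ 4)%:E)
         <= (Ct * supnorm (beta k) ^+ 4 / (N%:R ^+ 2))%:E
              * norm4_pow4 pif k phi)%E) :
  let Ckk := (Ct `^ (4%:R^-1) * supnorm (beta k)
               / (gamma k * pair (pip k) (fun p => beta k p.1))
               * (supnorm (fun p => beta k p.1 * phi p) + gamma k)) ^+ 4 in
  (\int[Pr]_w ((`| wemp_pair (fun i => Xt i w) (fun p => beta k p.1) phi
                   - pair (pif k) phi | ^+ 4)%:E)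
   <= (Ckk / (N%:R ^+ 2))%:E * norm4_pow4 pif k phi)%E.
Proof.
cbv zeta.
have [Mb beta_le] := A2b; have [M3 phi_le] := A3; have [g_gt0 _] := A1b.
pose b := fun p : Xh * Y => beta k p.1.
have b_ge0 p : 0 <= b p := beta_ge0 k p.1.
have mb : measurable_fun setT b := measurableT_comp (beta_meas k) measurable_fst.
have bphi_le p : `|b p * phi p| <= Num.max 1 (Mb ^+ 3 * M3).
  exact: normrM_le_exp4 (b_ge0 p) (beta_le _) (phi_le p).
have -> : pair (pif k) phi = pair (pip k) (b \* phi) / pair (pip k) b.
  apply: pair_reweight => //; last by apply: upd_step; rewrite k_ge1 leqnn.
  exact: (@bounded_integrable _ _ _ (pip k) (b \* phi) _ (measurable_funM mb phi_meas) bphi_le).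
have n_ge1 : (1 <= norm4_pow4 pif k phi)%E by rewrite le_max lexx.
apply: le_trans (wemp_pair_moment4_le N_gt0 Xt_meas mb phi_meas g_gt0 A1a
  accept (supnorm_ub bphi_le) (supnorm_ge0 bphi_le) n_ge1 H2 H1) _.
have CtSb_ge0 : 0 <= Ct * supnorm (beta k) ^+ 4.
  rewrite -(pmulr_lge0 _ (_ : 0 < (N%:R ^+ 2)^-1)) ?invr_gt0 ?exprn_gt0 ?ltr0n //.
  by rewrite -lee_fin (le_trans _ H1) // integral_ge0 // => w _; rewrite lee_fin.
rewrite (exp4_powR_mul CtSb_ge0) le_eqVlt; apply/orP; left; apply/eqP.
by congr (_%:E * _)%E; field; rewrite !gt_eqF // ltr0n.
Qed.
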